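(* Let $n\ge 4$ and let $X$ be a real $2\times n$ matrix with $\Delta_{i,j}(X)>0$ for all $1\le i<j\le n$. Then for all integers $1\le j<k<l\le n-1$, $$D_k D_{l-j}\ \ge\ D_j D_{l-k}+D_l D_{k-j}.$$
   Context: $\Delta_{i,j}(X)$ is the determinant of the $2\times2$ submatrix of columns $i,j$ of $X$. Let $\sigma$ act on strictly increasing pairs $(i,j)$, $1\le i<j\le n$, by $\sigma(i,j)=(i+1,j+1)$ if $j<n$ and $\sigma(i,n)=(1,i+1)$. For $k\in\{1,\dots,n-1\}$, $D_k=\left(\prod_{m=0}^{n-1}\Delta_{\sigma^m(1,k+1)}(X)\right)^{1/n}$ (geometric mean over the orbit $O_k=\{\sigma^m(1,k+1)\}$). *)

From HB Require Import structures.
From mathcomp Require Import all_boot all_order all_algebra.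
From mathcomp Require Import reals exp.
Set Implicit Arguments. Unset Strict Implicit. Unset Printing Implicit Defensive.
Import Order.TTheory GRing.Theory Num.Theory.
Local Open Scope ring_scope.

Section Minors.
Variables (R : realType) (n : nat).

(* Entry of X in row a and column i, with columns numbered 1..n as in the
   paper (0 outside the range, never used under the hypotheses). *)
Definition mxcol (X : 'M[R]_(2, n)) (a : 'I_2) (i : nat) : R :=
  match @insub nat (fun k => k < n)%N 'I_n i.-1 with
  | Some c => X a c
  | None => 0
  end.

Definition Delta (X : 'M[R]_(2, n)) (p : nat * nat) : R :=
  \det (\matrix_(a < 2, b < 2) mxcol X a (if b == 0 :> nat then p.1 else p.2)).

Definition sigma (p : nat * nat) : nat * nat :=
  if (p.2 < n)%N then (p.1.+1, p.2.+1) else (1%N, p.1.+1).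

Definition Dk (X : 'M[R]_(2, n)) (k : nat) : R :=
  powR (\prod_(m < n) Delta X (iter m sigma (1%N, k.+1))) (n%:R^-1).

End Minors.

From Pilot Require Import Defs.
From HB Require Import structures.
From mathcomp Require Import all_boot all_order all_algebra.
From mathcomp Require Import reals exp.
From mathcomp Require Import zify ring.
Set Implicit Arguments. Unset Strict Implicit. Unset Printing Implicit Defensive.
Import Order.TTheory GRing.Theory Num.Theory.
Local Open Scope ring_scope.

(* Extend the columns x_1, ..., x_n of X to a sequence (x_t)_t of
   vectors indexed by all t : nat with the sign twist x_(t+n) = - x_t, and put
   E t k = det [x_t, x_(t+k)].  Then E t k is n-periodic in t, and for
   0 < k < n the minors over the sigma-orbit of (1, k+1) are exactly
   E 0 k, ..., E (n-1) k; hence D_k is the geometric mean of t |-> E t k and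
   all these values are positive.  The three-term Pluecker relation
     E t k E (t+j) (l-j) = E t j E (t+k) (l-k) + E t l E (t+j) (k-j)
   holds termwise.  Since a geometric mean is multiplicative, invariant under
   a cyclic shift of a periodic sequence, and superadditive (a consequence of
   the AM-GM inequality), taking geometric means over t gives the theorem. *)

Lemma prod_periodic (R : comPzRingType) (n : nat) (f : nat -> R) :
  (forall m, f (m + n)%N = f m) ->
  forall s, \prod_(m < n) f (m + s)%N = \prod_(m < n) f m.
Proof.
move=> f_per; elim=> [|s IHs]; first by apply: eq_bigr => i _; rewrite addn0.
rewrite -IHs; case: n f_per {IHs} => [|n] f_per; first by rewrite !big_ord0.
rewrite [LHS]big_ord_recr [RHS]big_ord_recl /= mulrC; congr (_ * _).
  by rewrite add0n -addSnnS addnC f_per.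
by apply: eq_bigr => i _; rewrite /bump /= add1n addSnnS.
Qed.

Section GeometricMean.
Variables (R : realType) (n : nat).
Hypothesis n_gt0 : (0 < n)%N.

Definition gmean (f : nat -> R) : R := powR (\prod_(i < n) f i) n%:R^-1.

Lemma eq_gmean (f g : nat -> R) : (forall i, f i = g i) -> gmean f = gmean g.
Proof. by move=> fg; congr powR; apply: eq_bigr. Qed.

Lemma gmean_ge0 (f : nat -> R) : 0 <= gmean f.
Proof. exact: powR_ge0. Qed.

Lemma gmeanXn (f : nat -> R) : (forall i, 0 <= f i) ->
  gmean f ^+ n = \prod_(i < n) f i.
Proof.
move=> f_ge0; have P_ge0 : 0 <= \prod_(i < n) f i by apply: prodr_ge0.
rewrite -powR_mulrn ?powR_ge0 // -powRrM mulVf ?powRr1 //.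
by rewrite pnatr_eq0 -lt0n.
Qed.

Lemma gmean_le_amean (f : nat -> R) : (forall i, 0 <= f i) ->
  gmean f <= (\sum_(i < n) f i) / n%:R.
Proof.
move=> f_ge0.
have := @leif_AGM R _ [pred _ : 'I_n | true] (fun i => f i).
rewrite /= cardE /= size_enum_ord => /(_ (fun i _ => f_ge0 i)) AGM.
have mean_ge0 : 0 <= (\sum_(i < n) f i) / n%:R.
  by apply: divr_ge0; [apply: sumr_ge0 | apply: ler0n].
by rewrite -(ler_pXn2r n_gt0) ?nnegrE ?gmean_ge0 // gmeanXn //; apply: leif_le AGM.
Qed.

Lemma gmeanM (f g : nat -> R) : (forall i, 0 <= f i) -> (forall i, 0 <= g i) ->
  gmean (fun i => f i * g i) = gmean f * gmean g.
Proof.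
by move=> f_ge0 g_ge0; rewrite /gmean big_split /= powRM //; apply: prodr_ge0.
Qed.

Lemma gmean_shift (f : nat -> R) s : (forall m, f (m + n)%N = f m) ->
  gmean (fun m => f (m + s)%N) = gmean f.
Proof. by move=> f_per; rewrite /gmean prod_periodic. Qed.

(* Superadditivity: dividing by the geometric mean of a + b and applying
   AM-GM to a / (a + b) and to b / (a + b) gives two means summing to 1. *)
Lemma gmeanD (a b : nat -> R) : (forall i, 0 < a i) -> (forall i, 0 < b i) ->
  gmean a + gmean b <= gmean (fun i => a i + b i).
Proof.
move=> a_gt0 b_gt0; set c := fun i => a i + b i.
have c_gt0 i : 0 < c i by rewrite addr_gt0.
have Gc_gt0 : 0 < gmean c by rewrite powR_gt0 // prodr_gt0.
have ratio_bound (f : nat -> R) : (forall i, 0 < f i) ->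
    gmean f / gmean c <= (\sum_(i < n) f i / c i) / n%:R.
  move=> f_gt0; have q_gt0 i : 0 < f i / c i by rewrite divr_gt0.
  have -> : gmean f = gmean (fun i => f i / c i) * gmean c.
    rewrite -gmeanM => [||i]; last exact: ltW.
      by apply: eq_gmean => i; rewrite divfK // gt_eqF.
    by move=> i; apply: ltW.
  by rewrite mulfK ?gt_eqF // gmean_le_amean // => i; apply: ltW.
have sum_ratio : \sum_(i < n) (a i / c i + b i / c i) = n%:R.
  rewrite (eq_bigr (fun _ => 1)) => [|i _]; last first.
    by rewrite -mulrDl -/(c i) divff ?gt_eqF.
  by rewrite sumr_const card_ord.
have : gmean a / gmean c + gmean b / gmean c <= 1.
  apply: le_trans (lerD (ratio_bound a a_gt0) (ratio_bound b b_gt0)) _.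
  by rewrite -mulrDl -big_split /= sum_ratio divff // pnatr_eq0 -lt0n.
by rewrite -mulrDl ler_pdivrMr // mul1r.
Qed.

End GeometricMean.

Lemma det_mx22 (R : comPzRingType) (A : 'M[R]_2) :
  \det A = A 0 0 * A 1 1 - A 0 1 * A 1 0.
Proof.
rewrite (expand_det_row _ 0) !big_ord_recl big_ord0 /cofactor !det_mx11 /= !mxE.
rewrite addr0 expr0 mul1r expr1 mulN1r mulrN.
by congr (A _ _ * A _ _ - A _ _ * A _ _); apply/val_inj.
Qed.

Lemma pluecker3 (R : comPzRingType) (a0 a1 b0 b1 c0 c1 d0 d1 : R) :
  (a0 * c1 - c0 * a1) * (b0 * d1 - d0 * b1) =
  (a0 * b1 - b0 * a1) * (c0 * d1 - d0 * c1) +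
  (a0 * d1 - d0 * a1) * (b0 * c1 - c0 * b1).
Proof. by ring. Qed.

Lemma iter_sigma (n k m : nat) : (0 < k)%N -> (k < n)%N -> (m < n)%N ->
  iter m (sigma n) (1%N, k.+1) =
  if (m + k < n)%N then (m.+1, (m + k).+1) else ((m + k).+1 - n, m.+1)%N.
Proof.
move=> k_gt0 k_lt_n; elim: m => [|m IHm] m_lt_n; first by rewrite add0n k_lt_n.
rewrite iterS IHm; last by lia.
case: (ltnP (m + k) n) => mk; rewrite /sigma /=; repeat (case: ifP => ? /=).
all: first [by congr pair; lia | exfalso; lia].
Qed.

Section TwistedColumns.
Variables (R : realType) (n : nat) (X : 'M[R]_(2, n)).

(* Row a of the t-th twisted column (counting from 0): the column
   x_(t mod n + 1) of X, multiplied by (-1)^(t div n). *)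
Definition twcol (a : 'I_2) (t : nat) : R :=
  (-1) ^+ (t %/ n) * Defs.mxcol X a (t %% n).+1.

Definition twminor (t k : nat) : R :=
  twcol 0 t * twcol 1 (t + k) - twcol 0 (t + k) * twcol 1 t.

Lemma twminor_pluecker t j k l : (j <= k)%N -> (k <= l)%N ->
  twminor t k * twminor (t + j) (l - j) =
  twminor t j * twminor (t + k) (l - k) + twminor t l * twminor (t + j) (k - j).
Proof.
move=> j_le_k k_le_l; rewrite /twminor.
have -> : (t + j + (l - j) = t + l)%N by lia.
have -> : (t + k + (l - k) = t + l)%N by lia.
have -> : (t + j + (k - j) = t + k)%N by lia.
exact: pluecker3.
Qed.

Hypothesis n_gt0 : (0 < n)%N.

(* The sign twist x_(t+n) = - x_t makes every twisted minor n-periodic. *)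
Lemma twcolD_n a t : twcol a (t + n) = - twcol a t.
Proof.
have -> : (t + n = 1 * n + t)%N by rewrite mul1n addnC.
by rewrite /twcol divnMDl // modnMDl exprS mulN1r mulNr.
Qed.

Lemma twminor_periodic t k : twminor (t + n) k = twminor t k.
Proof. by rewrite /twminor addnAC !twcolD_n !mulrNN. Qed.

Lemma twminor_mod t k : twminor t k = twminor (t %% n) k.
Proof.
rewrite {1}(divn_eq t n) addnC; elim: (t %/ n)%N => [|q IHq].
  by rewrite mul0n addn0.
by rewrite mulSn (addnC n) addnA twminor_periodic.
Qed.

Lemma twcol_first a t : (t < n)%N -> twcol a t = Defs.mxcol X a t.+1.
Proof. by move=> t_lt_n; rewrite /twcol divn_small // modn_small // mul1r. Qed.

Lemma twcol_second a t : (n <= t)%N -> (t < n + n)%N ->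
  twcol a t = - Defs.mxcol X a (t - n).+1.
Proof.
move=> n_le_t t_lt_2n; rewrite /twcol.
have -> : (t = 1 * n + (t - n))%N by rewrite mul1n subnKC.
rewrite divnMDl // modnMDl divn_small ?modn_small; try lia.
by rewrite mul1n addKn expr1 mulN1r.
Qed.

Lemma DeltaE i j :
  Delta X (i, j) =
  Defs.mxcol X 0 i * Defs.mxcol X 1 j - Defs.mxcol X 0 j * Defs.mxcol X 1 i.
Proof. by rewrite /Delta det_mx22 !mxE. Qed.

Lemma Delta_orbit k m : (0 < k)%N -> (k < n)%N -> (m < n)%N ->
  Delta X (iter m (sigma n) (1%N, k.+1)) = twminor m k.
Proof.
move=> k_gt0 k_lt_n m_lt_n; rewrite iter_sigma //.
case: ltnP => mk; rewrite DeltaE /twminor; first by rewrite !twcol_first //; lia.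
rewrite [twcol 0 m]twcol_first // [twcol 1 m]twcol_first // !twcol_second;
  try lia.
by rewrite subSn //; ring.
Qed.

Lemma Dk_gmean k : (0 < k)%N -> (k < n)%N -> Dk X k = gmean n (twminor^~ k).
Proof.
by move=> k_gt0 k_lt_n; congr powR; apply: eq_bigr => m _; rewrite Delta_orbit.
Qed.

Hypothesis Delta_gt0 :
  forall i j : nat, (1 <= i)%N -> (i < j)%N -> (j <= n)%N -> 0 < Delta X (i, j).

Lemma twminor_gt0 t k : (0 < k)%N -> (k < n)%N -> 0 < twminor t k.
Proof.
move=> k_gt0 k_lt_n; have r_lt_n : (t %% n < n)%N by rewrite ltn_pmod.
rewrite twminor_mod -Delta_orbit // iter_sigma //.
by case: ltnP => mk; apply: Delta_gt0; lia.
Qed.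

Lemma DkM k k' s : (0 < k)%N -> (k < n)%N -> (0 < k')%N -> (k' < n)%N ->
  Dk X k * Dk X k' = gmean n (fun t => twminor t k * twminor (t + s) k').
Proof.
move=> *; rewrite !Dk_gmean // gmeanM => [||t]; last by apply/ltW/twminor_gt0.
  by rewrite (gmean_shift (f := twminor^~ k')) // => t; apply: twminor_periodic.
by move=> t; apply/ltW/twminor_gt0.
Qed.

End TwistedColumns.

Theorem mainTheorem9 (R : realType) (n : nat) (X : 'M[R]_(2, n)) :
  (4 <= n)%N ->
  (forall i j : nat, (1 <= i)%N -> (i < j)%N -> (j <= n)%N -> 0 < Delta X (i, j)) ->
  forall j k l : nat, (1 <= j)%N -> (j < k)%N -> (k < l)%N -> (l <= n.-1)%N ->
    Dk X j * Dk X (l - k) + Dk X l * Dk X (k - j) <= Dk X k * Dk X (l - j).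
Proof.
move=> n_ge4 Delta_gt0 j k l j_ge1 j_lt_k k_lt_l l_lt_n.
have n_gt0 : (0 < n)%N by lia.
have pos := twminor_gt0 n_gt0 Delta_gt0.
rewrite (DkM n_gt0 Delta_gt0 (k := j) (k' := l - k) k)
  1?(DkM n_gt0 Delta_gt0 (k := l) (k' := k - j) j)
  1?(DkM n_gt0 Delta_gt0 (k := k) (k' := l - j) j); try lia.
rewrite (eq_gmean n (fun t => twminor_pluecker X t (ltnW j_lt_k) (ltnW k_lt_l))).
by apply: (gmeanD n_gt0) => t; apply: mulr_gt0; apply: pos; lia.
Qed.
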